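(* Let $A,c>0$ be constants. For $n=1,2,\dots$ let $N_n$ be an index set and for $k\in N_n$ let $\mathbf M_{k,n}\in\mathbb R^{n\times p_n}$, $S_{k,n}\subseteq\{1,\dots,p_n\}$ and $\boldsymbol\beta_{k,n}\in\mathbb R^{p_n}$; let $\lambda_n=A\sqrt{\log(p_n)/n}$. Suppose that for some $\xi>c$, $$\sup_{k\in N_n}\frac{|S_{k,n}|\sqrt{\log(p_n)^2/n}}{\kappa^2(\xi,S_{k,n},\mathbf M_{k,n})}\to0\quad\text{and}\quad\sup_{k\in N_n}\sqrt{\log(p_n)}\,\|(\boldsymbol\beta_{k,n})_{S_{k,n}^c}\|_1\to0.$$ Then there exists $\xi'>c$ such that for every $c_1>0$, $\sup_{k\in N_n}\sqrt{\log(p_n)}\,\mu(c_1\lambda_n,\xi',\boldsymbol\beta_{k,n},\mathbf M_{k,n})\to0$.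
   Context: With $\mathscr C(\xi,T)=\{\mathbf u\ne\mathbf0:\|\mathbf u_{T^c}\|_1\le\xi\|\mathbf u_T\|_1\}$, the compatibility factor is $\kappa(\xi,T,\mathbf M)=\inf\{(\|\mathbf M\mathbf u\|_2/\sqrt n)/(\|\mathbf u_T\|_1/|T|):\mathbf u\in\mathscr C(\xi,T)\}$. For $\xi>1$, $\lambda>0$, $\boldsymbol\beta\in\mathbb R^p$, $\mathbf M\in\mathbb R^{n\times p}$, $$\mu(\lambda,\xi,\boldsymbol\beta,\mathbf M)=(\xi+1)\min_{T\subseteq\{1,\dots,p\}}\inf_{0<\nu<1}\max\Big[\frac{\|\boldsymbol\beta_{T^c}\|_1}{\nu},\ \frac{\lambda|T|/\{2(1-\nu)\}}{\kappa^2\{(\xi+\nu)/(1-\nu),T,\mathbf M\}}\Big].$$ *)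

From Stdlib Require Import Reals Lra ClassicalEpsilon.
Open Scope R_scope.

(* Index sets {1,...,p} are represented 0-based as {0,...,p-1}.
   Vectors in R^p are functions nat -> R (only indices j < p matter),
   matrices in R^{n x p} are functions nat -> nat -> R (entries M i j, i<n, j<p),
   subsets T of {0,...,p-1} are boolean predicates nat -> bool
   (only the values at j < p matter). *)

Fixpoint sumR (m : nat) (f : nat -> R) : R :=
  match m with O => 0 | S m' => sumR m' f + f m' end.

Definition card (p : nat) (T : nat -> bool) : R :=
  sumR p (fun j => if T j then 1 else 0).

Definition l1_on (p : nat) (T : nat -> bool) (u : nat -> R) : R :=
  sumR p (fun j => if T j then Rabs (u j) else 0).

Definition compl (T : nat -> bool) : nat -> bool := fun j => negb (T j).

Definition l2_Mu (n p : nat) (M : nat -> nat -> R) (u : nat -> R) : R :=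
  sqrt (sumR n (fun i => (sumR p (fun j => M i j * u j)) ^ 2)).

Definition in_cone (p : nat) (xi : R) (T : nat -> bool) (u : nat -> R) : Prop :=
  (exists j, (j < p)%nat /\ u j <> 0) /\
  l1_on p (compl T) u <= xi * l1_on p T u.

Definition is_glb (E : R -> Prop) (m : R) : Prop :=
  (forall x, E x -> m <= x) /\ (forall m', (forall x, E x -> m' <= x) -> m' <= m).

Definition Rinf (E : R -> Prop) : R := epsilon (inhabits 0) (is_glb E).

(* infimum with values in R u {+oo}: None stands for +oo = inf of the empty set *)
Definition Inf_ext (E : R -> Prop) : option R :=
  if excluded_middle_informative (exists x, E x) then Some (Rinf E) else None.

Definition kappa (n p : nat) (xi : R) (T : nat -> bool) (M : nat -> nat -> R)
  : option R :=
  Inf_ext (fun r => exists u, in_cone p xi T u /\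
             r = (l2_Mu n p M u / sqrt (INR n)) / (l1_on p T u / card p T)).

Definition esq (k : option R) : option R := option_map (fun x => x ^ 2) k.

(* division a / b of a finite nonnegative a by b in [0,+oo]:
   a/+oo = 0, a/0 = +oo for a > 0, and 0/0 := 0 (degenerate convention) *)
Definition ediv (a : R) (b : option R) : option R :=
  match b with
  | None => Some 0
  | Some b' =>
      if Req_EM_T b' 0 then (if Req_EM_T a 0 then Some 0 else None)
      else Some (a / b')
  end.

(* The min over T of the inf over nu is the inf over
   all pairs (T, nu); pairs whose second term is +oo are irrelevant since the
   pair (T = empty, nu) always gives a finite value. *)
Definition mu (n p : nat) (lam xi : R) (beta : nat -> R) (M : nat -> nat -> R) : R :=
  (xi + 1) *
  Rinf (fun r => exists (T : nat -> bool) (nu b : R),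
          0 < nu < 1 /\
          ediv (lam * card p T / (2 * (1 - nu)))
               (esq (kappa n p ((xi + nu) / (1 - nu)) T M)) = Some b /\
          r = Rmax (l1_on p (compl T) beta / nu) b).

(* sup_{k in N_n} f n k -> 0 as n -> oo, for nonnegative f
   (with the convention sup over an empty index set = 0) *)
Definition sup_to_zero (N : nat -> Type) (f : forall n, N n -> R) : Prop :=
  forall eps, 0 < eps -> exists n0, forall n, (n0 <= n)%nat ->
    forall k : N n, f n k <= eps.

Definition sup_to_zero_ext (N : nat -> Type) (f : forall n, N n -> option R) : Prop :=
  forall eps, 0 < eps -> exists n0, forall n, (n0 <= n)%nat ->
    forall k : N n, exists r, f n k = Some r /\ r <= eps.

(* Fix nu in (0,1) and xi' > c with (xi' + nu) / (1 - nu) = xi.  Taking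
   T = S_{k,n} and this fixed nu in the definition of mu bounds
   sqrt(log p_n) mu(c1 lambda_n, xi', beta, M) by (xi' + 1) times the maximum of
   sqrt(log p_n) ||beta_{S^c}||_1 / nu and a constant multiple of
   |S| sqrt(log(p_n)^2 / n) / kappa^2(xi, S, M); both tend to 0 uniformly in k. *)

From Stdlib Require Import Reals Lra Lia ClassicalEpsilon.
Open Scope R_scope.

Lemma sumR_nonneg m f : (forall j, 0 <= f j) -> 0 <= sumR m f.
Proof.
  intro Hf; induction m as [|m IH]; simpl; [lra|].
  specialize (Hf m); lra.
Qed.

Lemma l1_on_nonneg p T u : 0 <= l1_on p T u.
Proof. apply sumR_nonneg; intro j; destruct (T j); [apply Rabs_pos | lra]. Qed.

Lemma card_nonneg p T : 0 <= card p T.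
Proof. apply sumR_nonneg; intro j; destruct (T j); lra. Qed.

Lemma Rinf_is_glb (E : R -> Prop) (m : R) :
  (exists x, E x) -> (forall x, E x -> m <= x) -> is_glb E (Rinf E).
Proof.
  intros [x Ex] Hm. unfold Rinf. apply epsilon_spec.
  destruct (completeness (fun y => E (- y))) as [l [Hub Hlub]].
  - exists (- m). intros y Ey. specialize (Hm _ Ey). lra.
  - exists (- x). rewrite Ropp_involutive; exact Ex.
  - exists (- l). split.
    + intros z Ez. enough (- z <= l) by lra.
      apply Hub. rewrite Ropp_involutive; exact Ez.
    + intros m' Hm'. enough (l <= - m') by lra.
      apply Hlub. intros y Ey. specialize (Hm' _ Ey). lra.
Qed.

Lemma ediv_esq_nonneg a k r : 0 <= a -> ediv a (esq k) = Some r -> 0 <= r.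
Proof.
  intros Ha Hr. destruct k as [K|]; cbn [ediv esq option_map] in Hr.
  - destruct (Req_EM_T (K ^ 2) 0); [destruct (Req_EM_T a 0)|];
      try discriminate; injection Hr as <-; [lra|].
    apply Rle_mult_inv_pos; [exact Ha|].
    pose proof (pow2_ge_0 K); lra.
  - injection Hr as <-; lra.
Qed.

Lemma ediv_scale a k r C : ediv a k = Some r -> ediv (C * a) k = Some (C * r).
Proof.
  destruct k as [b|]; simpl; intro Hr.
  - destruct (Req_EM_T b 0); [destruct (Req_EM_T a 0) as [->|]|];
      try discriminate; injection Hr as <-.
    + rewrite Rmult_0_r. destruct (Req_EM_T 0 0); [f_equal; ring | lra].
    + f_equal; unfold Rdiv; ring.
  - injection Hr as <-; f_equal; ring.
Qed.

Lemma mu_le n p lam xi beta M T nu b :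
  -1 <= xi -> 0 < nu < 1 ->
  ediv (lam * card p T / (2 * (1 - nu)))
       (esq (kappa n p ((xi + nu) / (1 - nu)) T M)) = Some b ->
  mu n p lam xi beta M <= (xi + 1) * Rmax (l1_on p (compl T) beta / nu) b.
Proof.
  intros Hxi Hnu Hb. unfold mu. apply Rmult_le_compat_l; [lra|].
  refine (proj1 (Rinf_is_glb _ 0 _ _) _ _).
  - eexists; exists T, nu, b; eauto.
  - intros x (T' & nu' & b' & Hnu' & _ & ->).
    eapply Rle_trans; [|apply Rmax_l].
    apply Rle_mult_inv_pos; [apply l1_on_nonneg | lra].
  - exists T, nu, b; auto.
Qed.

Lemma cone_parameter_shift c xi : 0 < c -> c < xi ->
  exists xi' nu, c < xi' /\ 0 < nu < 1 /\ (xi' + nu) / (1 - nu) = xi.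
Proof.
  intros Hc Hxi. set (xi' := (c + xi) / 2).
  exists xi', ((xi - xi') / (1 + xi)).
  assert (0 < xi' < xi) by (unfold xi'; lra).
  split; [unfold xi'; lra|]. split.
  - split; [apply Rdiv_lt_0_compat; lra|].
    apply Rmult_lt_reg_r with (1 + xi); [lra|].
    unfold Rdiv; rewrite Rmult_assoc, Rinv_l; lra.
  - field; split; lra.
Qed.

Lemma sqrt_sqr_div x y : 0 <= x -> sqrt (x ^ 2 / y) = sqrt x * sqrt (x / y).
Proof.
  intro Hx. rewrite <- sqrt_mult_alt by exact Hx.
  f_equal; unfold Rdiv; ring.
Qed.

Lemma sqrt_ln_mu_le n p A c1 xi nu beta M T r :
  -1 <= xi -> 0 < nu < 1 -> 0 <= c1 * A ->
  ediv (card p T * sqrt (ln (INR p) ^ 2 / INR n))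
       (esq (kappa n p ((xi + nu) / (1 - nu)) T M)) = Some r ->
  sqrt (ln (INR p)) * mu n p (c1 * (A * sqrt (ln (INR p) / INR n))) xi beta M
  <= (xi + 1) / nu * (sqrt (ln (INR p)) * l1_on p (compl T) beta)
     + (xi + 1) * (c1 * A / (2 * (1 - nu))) * r.
Proof.
  intros Hxi Hnu HcA Hr.
  set (q := sqrt (ln (INR p))). set (C := c1 * A / (2 * (1 - nu))).
  set (u := l1_on p (compl T) beta).
  assert (Hr0 : 0 <= r).
  { eapply ediv_esq_nonneg; [|exact Hr].
    apply Rmult_le_pos; [apply card_nonneg | apply sqrt_pos]. }
  assert (HC : 0 <= C) by (apply Rle_mult_inv_pos; lra).
  assert (HCr : 0 <= (xi + 1) * C * r) by (apply Rmult_le_pos; [apply Rmult_le_pos|]; lra).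
  destruct (Rle_or_lt (ln (INR p)) 0) as [Hln|Hln].
  { unfold q; rewrite sqrt_neg_0 by exact Hln. lra. }
  assert (Hq : 0 < q) by (apply sqrt_lt_R0; exact Hln).
  assert (Hlam : c1 * (A * sqrt (ln (INR p) / INR n)) * card p T / (2 * (1 - nu))
                 = C / q * (card p T * sqrt (ln (INR p) ^ 2 / INR n))).
  { rewrite sqrt_sqr_div by lra. fold q. unfold C. field; lra. }
  pose proof (ediv_scale _ _ _ (C / q) Hr) as Hb. rewrite <- Hlam in Hb.
  pose proof (mu_le n p _ xi beta M T nu _ Hxi Hnu Hb) as Hmu. fold u in Hmu.
  assert (Hmax : Rmax (u / nu) (C / q * r) <= u / nu + C / q * r).
  { assert (0 <= u / nu) by (apply Rle_mult_inv_pos; [apply l1_on_nonneg | lra]).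
    assert (0 <= C / q * r) by (apply Rmult_le_pos; [apply Rle_mult_inv_pos|]; lra).
    unfold Rmax; destruct Rle_dec; lra. }
  apply Rle_trans with (q * ((xi + 1) * (u / nu + C / q * r))).
  - apply Rmult_le_compat_l; [lra|].
    eapply Rle_trans; [exact Hmu|]. apply Rmult_le_compat_l; lra.
  - right; field; lra.
Qed.

Lemma sup_to_zero_dominated (N : nat -> Type) (f g : forall n, N n -> R)
  (h : forall n, N n -> option R) (a b : R) :
  0 <= a -> 0 <= b ->
  (forall n k r, h n k = Some r -> f n k <= a * g n k + b * r) ->
  sup_to_zero N g -> sup_to_zero_ext N h -> sup_to_zero N f.
Proof.
  intros Ha Hb Hf Hg Hh eps Heps.
  set (eps' := eps / (a + b + 1)).
  assert (Heps' : 0 < eps') by (apply Rdiv_lt_0_compat; lra).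
  assert (Hsum : a * eps' + b * eps' <= eps).
  { unfold eps'. apply Rmult_le_reg_r with (a + b + 1); [lra|].
    field_simplify; [nra | lra]. }
  destruct (Hg eps' Heps') as [n1 Hn1]. destruct (Hh eps' Heps') as [n2 Hn2].
  exists (Nat.max n1 n2). intros n Hn k.
  destruct (Hn2 n ltac:(lia) k) as [r [Hr Hreps]].
  specialize (Hn1 n ltac:(lia) k).
  specialize (Hf n k r Hr).
  assert (a * g n k <= a * eps') by (apply Rmult_le_compat_l; lra).
  assert (b * r <= b * eps') by (apply Rmult_le_compat_l; lra).
  lra.
Qed.

Theorem mainTheorem12 (A c : R) (hA : 0 < A) (hc : 0 < c)
  (p : nat -> nat) (N : nat -> Type)
  (M : forall n, N n -> nat -> nat -> R)
  (S : forall n, N n -> nat -> bool)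
  (beta : forall n, N n -> nat -> R) :
  let lambda := fun n : nat => A * sqrt (ln (INR (p n)) / INR n) in
  (exists xi, c < xi /\
     sup_to_zero_ext N (fun n k =>
       ediv (card (p n) (S n k) * sqrt (ln (INR (p n)) ^ 2 / INR n))
            (esq (kappa n (p n) xi (S n k) (M n k))))) ->
  sup_to_zero N (fun n k =>
     sqrt (ln (INR (p n))) * l1_on (p n) (compl (S n k)) (beta n k)) ->
  exists xi', c < xi' /\
    forall c1, 0 < c1 ->
      sup_to_zero N (fun n k =>
        sqrt (ln (INR (p n))) * mu n (p n) (c1 * lambda n) xi' (beta n k) (M n k)).
Proof.
  intros lambda [xi [Hxi Hkappa]] Hbeta.
  destruct (cone_parameter_shift c xi hc Hxi) as (xi' & nu & Hxi' & Hnu & Hshift).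
  exists xi'. split; [exact Hxi'|]. intros c1 Hc1.
  assert (HC : 0 <= c1 * A / (2 * (1 - nu))) by (apply Rle_mult_inv_pos; nra).
  refine (sup_to_zero_dominated _ _ _ _ ((xi' + 1) / nu)
            ((xi' + 1) * (c1 * A / (2 * (1 - nu)))) _ _ _ Hbeta Hkappa).
  - apply Rle_mult_inv_pos; lra.
  - apply Rmult_le_pos; lra.
  - intros n k r Hr. apply sqrt_ln_mu_le; [lra | exact Hnu | nra |].
    rewrite Hshift. exact Hr.
Qed.
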